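(* Let $a\ge 2$ be even, and let $(c,d)\in\mathcal{B}$ with $c\ge 0$ and $c+d\ge 1$. Then $U=\{(a,-a),(c,d)\}\subseteq\mathcal{B}$ is unavoidable.
   Context: The bicyclic inverse semigroup is $\mathcal{B}=\{(a,b)\in\mathbb{Z}\times\mathbb{Z}\mid a\ge 0,\ a+b\ge 0\}$ with multiplication $(a,b)(c,d)=(\max\{c+d,a\}-d,\ b+d)$. A subset $U\subseteq\mathcal{B}$ is called avoidable if $\mathcal{B}$ can be partitioned into two subsets $A$ and $B$ such that no element of $U$ can be written as a product $xy$ of two distinct elements $x\neq y$ both in $A$, or both in $B$. A set is unavoidable if it is not avoidable. *)

From Stdlib Require Import ZArith.
Open Scope Z_scope.

Definition inB (x : Z * Z) : Prop := 0 <= fst x /\ 0 <= fst x + snd x.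

Definition bmul (x y : Z * Z) : Z * Z :=
  (Z.max (fst y + snd y) (fst x) - snd y, snd x + snd y).

(* U (a subset of B) is avoidable if B can be partitioned into two sets A, B
   (encoded by a colouring col : Z*Z -> bool restricted to B: A = col true,
   B = col false) such that no element of U is a product xy of distinct
   x, y in B of the same colour. *)
Definition avoidable (U : Z * Z -> Prop) : Prop :=
  exists col : Z * Z -> bool,
    forall x y : Z * Z, inB x -> inB y -> x <> y -> col x = col y ->
      ~ U (bmul x y).

Definition unavoidable (U : Z * Z -> Prop) : Prop := ~ avoidable U.

(* With [a = 2h], take x = (h,-h), y = (h+1,-h) and z = (c, h+d) in B.
   Then xy = (a,-a) and xz = yz = (c,d).  Of three elements coloured with
   two colours, two share a colour, so one of these products is forced to
   be monochromatic. *)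

From Stdlib Require Import ZArith Lia.
Open Scope Z_scope.

Lemma bmul_small (x y : Z * Z) :
  fst x <= fst y + snd y -> bmul x y = (fst y, snd x + snd y).
Proof. intro H; unfold bmul; f_equal; lia. Qed.

Lemma bmul_large (x y : Z * Z) :
  fst y + snd y <= fst x -> bmul x y = (fst x - snd y, snd x + snd y).
Proof. intro H; unfold bmul; f_equal; lia. Qed.

Lemma bool_pigeonhole (b1 b2 b3 : bool) : b1 = b2 \/ b1 = b3 \/ b2 = b3.
Proof. destruct b1, b2, b3; auto. Qed.

Lemma unavoidable_of_triangle (U : Z * Z -> Prop) (x y z : Z * Z) :
  inB x -> inB y -> inB z -> x <> y -> x <> z -> y <> z ->
  U (bmul x y) -> U (bmul x z) -> U (bmul y z) -> unavoidable U.
Proof.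
  intros Bx By Bz Nxy Nxz Nyz Uxy Uxz Uyz [col Hcol].
  destruct (bool_pigeonhole (col x) (col y) (col z)) as [E | [E | E]].
  - exact (Hcol x y Bx By Nxy E Uxy).
  - exact (Hcol x z Bx Bz Nxz E Uxz).
  - exact (Hcol y z By Bz Nyz E Uyz).
Qed.

Theorem lemma3p1 (a c d : Z) :
  2 <= a -> Z.Even a ->
  inB (c, d) -> 0 <= c -> 1 <= c + d ->
  unavoidable (fun u => u = (a, - a) \/ u = (c, d)).
Proof.
  intros Ha [h ->] _ Hc Hcd.
  apply (unavoidable_of_triangle _ (h, - h) (h + 1, - h) (c, h + d));
    try (unfold inB; cbn [fst snd]; lia); try (intro E; injection E; intros; lia).
  - left; rewrite bmul_large by (cbn [fst snd]; lia); cbn [fst snd]; f_equal; lia.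
  - right; rewrite bmul_small by (cbn [fst snd]; lia); cbn [fst snd]; f_equal; lia.
  - right; rewrite bmul_small by (cbn [fst snd]; lia); cbn [fst snd]; f_equal; lia.
Qed.
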